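(* Let $q$ be a prime power, $m\ge1$, $1\le k\le n$, $g_1,\dots,g_n\in\mathbb{F}_{q^m}$ linearly independent over $\mathbb{F}_q$, $\mathbf g=(g_1,\dots,g_n)$, $\mathbf r\in\mathbb{F}_{q^m}^n$. Then Algorithm 2 (described in the context), given $k$, $\Pi_{\mathbf g}$ and $\Lambda_{\mathbf g,\mathbf r}$, has computational complexity order $\mathcal{O}_{q^m}(n^2)$.
   Context: Write $[i]:=q^i$. A $q$-linearized polynomial is $f(x)=\sum_{i=0}^{d}a_ix^{[i]}$, $a_i\in\mathbb{F}_{q^m}$; if $a_d\ne0$, $d=\mathrm{qdeg}(f)$ ($\mathrm{qdeg}(0)=-\infty$). $\mathcal{L}_q(x,q^m)$ is the ring of these under addition and composition $\circ$. $\Pi_{\mathbf g}(x)=\prod_{u\in\langle g_1,\dots,g_n\rangle}(x-u)$ ($\mathbb{F}_q$-span), of $q$-degree $n$. For $\mathbf r=(r_1,\dots,r_n)$, $\Lambda_{\mathbf g,\mathbf r}(x)=\sum_{i=1}^n(-1)^{n-i}r_i\det(\mathfrak D_i(\mathbf g,x))/\det(M_n(g_1,\dots,g_n))$ ($M_n(v_1,\dots,v_s)$ the $n\times s$ matrix with $(j,l)$ entry $v_l^{[j-1]}$; $\mathfrak D_i(\mathbf g,x)$ is $M_n(g_1,\dots,g_n,x)$ without column $i$), of $q$-degree $<n$. Algorithm 2: $P_0=\Pi_{\mathbf g}$, $K_0=0$, $N_0=-\Lambda_{\mathbf g,\mathbf r}$, $D_0=x$, $j=0$; while $\mathrm{qdeg}(D_j)+k-1<\mathrm{qdeg}(N_j)$: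 compute by right symbolic division $q_j,r_j\in\mathcal{L}_q(x,q^m)$ with $P_j=q_j\circ N_j+r_j$ and $\mathrm{qdeg}(r_j)<\mathrm{qdeg}(N_j)$; set $P_{j+1}=N_j$, $K_{j+1}=D_j$, $N_{j+1}=r_j$, $D_{j+1}=K_j-q_j\circ D_j$; $j:=j+1$. Return $[P_j\ \ K_j]$ and $[N_j\ \ D_j]$. Complexity conventions: elements of $\mathbb{F}_{q^m}$ are stored w.r.t. a normal basis of $\mathbb{F}_{q^m}$ over $\mathbb{F}_q$, so $q$-th powers are free; $\mathcal{O}_{q^m}(\cdot)$ counts arithmetic operations in $\mathbb{F}_{q^m}$. *)

From HB Require Import structures.
From mathcomp Require Import all_boot all_order all_algebra.
Set Implicit Arguments. Unset Strict Implicit. Unset Printing Implicit Defensive.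
Import GRing.Theory.
Local Open Scope ring_scope.

(* A q-linearized polynomial  f = sum_i a_i x^[i]  over F is
   stored as the ordinary polynomial  sum_i a_i X^i  (its coefficient list);
   qdeg f = (size f).-1, and qdeg 0 = -oo corresponds to size 0.
   Field elements are in a normal basis, so q^i-th powers (frob) are free.
   Every other arithmetic operation of F (+, -, *, inverse, negation) costs 1. *)

Section Linearized.
Variables (F : fieldType) (q : nat).

Definition frob (i : nat) (x : F) : F := x ^+ (q ^ i).

Definition lcomp (A B : {poly F}) : {poly F} :=
  \sum_(i < size A) (A`_i *: (map_poly (frob i) B * 'X^i)).

(* cost of schoolbook composition: one product and one addition per pair *)
Definition lcomp_cost (A B : {poly F}) : nat := 2 * (size A * size B).

(* Right symbolic division of R by N (with invl = inverse of lead coef of N):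
   each step eliminates the leading term of R using  a x^[t] o N, where
   a = lead(R) * invl^[t]  (1 multiplication; frob is free), then subtracts
   a * N_j^[t] from R_{t+j} for all j  (2 * size N operations). *)
Fixpoint rdiv_loop (fuel : nat) (N : {poly F}) (invl : F) (Q R : {poly F})
    (c : nat) : {poly F} * {poly F} * nat :=
  match fuel with
  | 0 => (Q, R, c)
  | fuel'.+1 =>
    if (size R < size N)%N then (Q, R, c) else
    let t := (size R - size N)%N in
    let a := lead_coef R * frob t invl in
    rdiv_loop fuel' N invl (Q + a *: 'X^t)
      (R - a *: (map_poly (frob t) N * 'X^t)) (c + 1 + 2 * size N)%N
  end.

(* P = Q o N + R ; returns (Q, R, cost); the inversion of lead(N) costs 1 *)
Definition rdiv (P N : {poly F}) : {poly F} * {poly F} * nat :=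
  rdiv_loop (size P) N (lead_coef N)^-1 0 P 1.

(* loop condition  qdeg(D) + k - 1 < qdeg(N)  with qdeg 0 = -oo *)
Definition alg2_cond (k : nat) (N D : {poly F}) : bool :=
  if D == 0 then N != 0 else ((size D).-1 + k < size N)%N.

Fixpoint alg2_loop (fuel k : nat) (P K N D : {poly F}) (c : nat)
    : {poly F} * {poly F} * {poly F} * {poly F} * nat :=
  match fuel with
  | 0 => (P, K, N, D, c)
  | fuel'.+1 =>
    if alg2_cond k N D then
      let: (Qj, Rj, cd) := rdiv P N in
      let QD := lcomp Qj D in
      alg2_loop fuel' k N D Rj (K - QD)
        (c + cd + lcomp_cost Qj D + maxn (size K) (size QD))%N
    else (P, K, N, D, c)
  end.

(* Algorithm 2 on inputs k, Pi, Lambda: P0 = Pi, K0 = 0, N0 = -Lambda,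
   D0 = x; the negation of Lambda costs size Lambda operations.
   The fuel size Pi exceeds the number of iterations (qdeg N strictly
   decreases). *)
Definition alg2 (k : nat) (Pi Lam : {poly F}) :=
  alg2_loop (size Pi) k Pi 0 (- Lam) 'X (size Lam).

Definition alg2_cost (k : nat) (Pi Lam : {poly F}) : nat :=
  (alg2 k Pi Lam).2.

Variable n : nat.

Definition Fq_span (F' : finFieldType) (q' : nat) (g : 'I_n -> F') : {set F'} :=
  [set u | [exists c : {ffun 'I_n -> F'},
      [forall i, c i ^+ q' == c i] && (u == \sum_(i < n) c i * g i)]].

Definition moore (g : 'I_n -> F) : 'M[F]_n := \matrix_(j < n, l < n) (g l) ^+ (q ^ j).

(* columns of M_n(g_1,..,g_n,x) as polynomials in x *)
Definition ext_col (g : 'I_n -> F) (l : 'I_n.+1) : {poly F} :=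
  if unlift ord_max l is Some l' then (g l')%:P else 'X.

(* D_i(g,x): M_n(g_1..g_n,x) without column i *)
Definition Dmat (g : 'I_n -> F) (i : 'I_n) : 'M[{poly F}]_n :=
  \matrix_(j < n, l < n) (ext_col g (lift (widen_ord (leqnSn n) i) l)) ^+ (q ^ j).

(* Lambda_{g,r} as an ordinary polynomial in x *)
Definition Lambda_full (g r : 'I_n -> F) : {poly F} :=
  \sum_(i < n) (((-1) ^+ (n - 1 - i) * r i / \det (moore g)) *: \det (Dmat g i)).

(* its q-linearized coefficient vector (q-degree < n) *)
Definition Lambda_lin (g r : 'I_n -> F) : {poly F} :=
  \poly_(j < n) (Lambda_full g r)`_(q ^ j).
End Linearized.

Definition Pi_full (F : finFieldType) (q n : nat) (g : 'I_n -> F) : {poly F} :=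
  \prod_(u in Fq_span q g) ('X - u%:P).

Definition Pi_lin (F : finFieldType) (q n : nat) (g : 'I_n -> F) : {poly F} :=
  \poly_(j < n.+1) (Pi_full q g)`_(q ^ j).

Definition prime_power (q : nat) : Prop :=
  exists p e : nat, prime p /\ (0 < e)%N /\ q = (p ^ e)%N.

Definition Fq_lin_indep (F : finFieldType) (q n : nat) (g : 'I_n -> F) : Prop :=
  forall c : 'I_n -> F, (forall i, c i ^+ q = c i) ->
    \sum_(i < n) c i * g i = 0 -> forall i, c i = 0.

From mathcomp Require Import all_boot all_order all_algebra.
From mathcomp Require Import zify.
Set Implicit Arguments. Unset Strict Implicit. Unset Printing Implicit Defensive.
Import GRing.Theory.
Local Open Scope ring_scope.

(* The loop preserves the degree bookkeeping of the extended Euclidean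
   algorithm, so every polynomial it handles has size at most n + 3.  Writing
   rho_j = size N_j, the j-th right division costs O(n (rho_{j-1} - rho_j + 1)),
   and so do the composition and subtraction that follow it.  The potential
   max(rho_{j-1}, rho_j) + 2 rho_j is at most 3n + 1 initially and drops by at
   least rho_{j-1} - rho_j + 1 per iteration, so the total cost is O(n^2). *)

Section Alg2Cost.
Variables (F : fieldType) (q : nat).
Hypothesis q_gt0 : (0 < q)%N.

Lemma frob0 t : frob q t (0 : F) = 0.
Proof. by rewrite /frob expr0n expn_eq0 eqn0Ngt q_gt0. Qed.

Lemma size_lcomp (A B : {poly F}) : (size (lcomp q A B) <= (size A + size B).-1)%N.
Proof.
rewrite /lcomp; apply: (big_ind (fun p : {poly F} => size p <= _)%N).
- by rewrite size_poly0.
- by move=> x y hx hy; apply: leq_trans (size_polyD _ _) _; rewrite geq_max hx hy.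
move=> i _; apply: leq_trans (size_scale_leq _ _) _.
apply: leq_trans (size_polyMleq _ _) _; rewrite size_polyXn.
have := size_poly (size B) (fun j => frob q i B`_j).
rewrite -/(map_poly _ B) => hB.
have hi := ltn_ord i; lia.
Qed.

Lemma size_rdiv_step (N R : {poly F}) : N != 0 -> (size N <= size R)%N ->
  let t := (size R - size N)%N in
  let a := lead_coef R * frob q t (lead_coef N)^-1 in
  (size (R - a *: (map_poly (frob q t) N * 'X^t))%R < size R)%N.
Proof.
move=> N0 hNR /=; set t := (size R - size N)%N; set a := lead_coef R * _.
have sN : (0 < size N)%N by rewrite size_poly_gt0.
have sR : (0 < size R)%N by lia.
rewrite -(prednK sR) ltnS; apply/leq_sizeP => j hj.
rewrite coefB coefZ coefMXn.
have -> : (j < t)%N = false by apply/negbTE; rewrite -leqNgt /t; lia.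
rewrite coef_map_id0 ?frob0 //.
have [->|nej] := eqVneq j (size R).-1.
  have -> : ((size R).-1 - t = (size N).-1)%N by rewrite /t; lia.
  (* frob is multiplicative, so a * lead(N)^[t] = lead(R) *)
  rewrite -!lead_coefE /a /frob -mulrA -exprMn mulVf ?lead_coef_eq0 //.
  by rewrite expr1n mulr1 subrr.
have hRj : (size R <= j)%N by lia.
have hNj : (size N <= j - t)%N by rewrite /t; lia.
by rewrite (nth_default 0 hRj) (nth_default 0 hNj) frob0 mulr0 subr0.
Qed.

Lemma rdiv_loop_spec fuel (N : {poly F}) b : N != 0 ->
  forall (Q R Q' R' : {poly F}) (c c' : nat),
  (size R < fuel + size N)%N -> (size R <= b)%N -> (size Q <= b + 1 - size N)%N ->
  rdiv_loop q fuel N (lead_coef N)^-1 Q R c = (Q', R', c') ->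
  [/\ (size R' < size N)%N, (size Q' <= b + 1 - size N)%N &
      (c' <= c + (size R + 1 - size N) * (1 + 2 * size N))%N].
Proof.
move=> N0; elim: fuel => [|fuel IH] Q R Q' R' c c' hfuel hRb hQ /=.
  by case=> <- <- <-; split => //; rewrite leq_addr.
case: ifPn => [hRN|]; first by case=> <- <- <-; split => //; rewrite leq_addr.
rewrite -leqNgt => hNR.
have /= hR := size_rdiv_step N0 hNR.
move=> /IH [] //.
- by apply: leq_trans hR _; rewrite -ltnS -addSn.
- exact: leq_trans (ltnW hR) hRb.
- apply: leq_trans (size_polyD _ _) _; rewrite geq_max hQ /=.
  apply: leq_trans (size_scale_leq _ _) _; rewrite size_polyXn.
  (* [size] on {poly F} occurs with two convertible carrier instances, which
     lia would treat as distinct atoms; [set] identifies them. *)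
  by move: hNR hRb; set sN := size N; set sR := size R; lia.
move=> -> -> hc; split => //; apply: leq_trans hc _.
move: hR hNR; set R1 := size _; set sN := size N; set sR := size R.
set w := (1 + 2 * sN)%N => hR hNR.
have : ((R1 + 1 - sN) * w <= (sR - sN) * w)%N by apply: leq_mul => //; lia.
have -> : (sR + 1 - sN = (sR - sN).+1)%N by lia.
rewrite mulSn; lia.
Qed.

Lemma rdiv_spec (P N Q R : {poly F}) c : N != 0 -> rdiv q P N = (Q, R, c) ->
  [/\ (size R < size N)%N, (size Q <= size P + 1 - size N)%N &
      (c <= 1 + (size P + 1 - size N) * (1 + 2 * size N))%N].
Proof.
move=> N0 /(@rdiv_loop_spec (size P) N (size P) N0) [] //.
- by rewrite -{1}(addn0 (size P)) ltn_add2l size_poly_gt0.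
- by rewrite size_poly0.
Qed.

Definition alg2_inv (B : nat) (P K N D : {poly F}) : bool :=
  [&& size D + size P <= B, size D + size N <= B & size K + size N <= B]%N.

Definition alg2_potential (P N : {poly F}) : nat :=
  maxn (size P) (size N) + 2 * size N.

Lemma alg2_cond_neq0 k (N D : {poly F}) : alg2_cond k N D -> N != 0.
Proof.
rewrite /alg2_cond; case: ifP => // _ hND.
by rewrite -size_poly_gt0; apply: leq_ltn_trans hND.
Qed.

Section Alg2Step.
Variables (B : nat) (P K N D Q R : {poly F}) (cd : nat).
Hypotheses (N0 : N != 0) (rdivPN : rdiv q P N = (Q, R, cd)).
Hypothesis inv : alg2_inv B P K N D.

Lemma alg2_inv_step : alg2_inv B N D R (K - lcomp q Q D).
Proof.
have [hR hQ _] := rdiv_spec N0 rdivPN.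
have hQD := size_lcomp Q D.
have hKQD : (size (K - lcomp q Q D)%R <= maxn (size K) (size (lcomp q Q D)))%N.
  by rewrite -(size_polyN (lcomp q Q D)) size_polyD.
move: inv hR hQ hQD hKQD; rewrite /alg2_inv.
set sP := size P; set sN := size N; set sD := size D; set sK := size K.
set sQ := size Q; set sQD := size (lcomp q Q D).
by case/and3P=> *; apply/and3P; split; lia.
Qed.

Lemma alg2_step_cost :
  (cd + lcomp_cost Q D + maxn (size K) (size (lcomp q Q D))
     + 4 * B.+1 * alg2_potential N R <= 4 * B.+1 * alg2_potential P N)%N.
Proof.
have [hR hQ hcd] := rdiv_spec N0 rdivPN.
have hQD := size_lcomp Q D.
move: inv hR hQ hcd hQD; rewrite /alg2_inv /lcomp_cost /alg2_potential.
set sP := size P; set sN := size N; set sD := size D; set sK := size K.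
set sQ := size Q; set sR := size R; set sQD := size (lcomp q Q D).
case/and3P=> hDP hDN hKN hR; set s := (sP + 1 - sN)%N => hQ hcd hQD.
have hcomp : (sQ * sD <= s * B)%N by apply: leq_mul; lia.
have hdiv : (s * (1 + 2 * sN) <= s * (1 + 2 * B))%N by apply: leq_mul; lia.
have hdrop : (maxn sN sR + 2 * sR + s.+1 <= maxn sP sN + 2 * sN)%N by rewrite /s; lia.
by have := leq_mul (leqnn (4 * B.+1)) hdrop; lia.
Qed.

End Alg2Step.

Lemma alg2_loop_cost k B fuel : forall (P K N D : {poly F}) c,
  alg2_inv B P K N D ->
  ((alg2_loop q fuel k P K N D c).2 <= c + 4 * B.+1 * alg2_potential P N)%N.
Proof.
elim: fuel => [|fuel IH] P K N D c inv /=; first exact: leq_addr.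
case: ifP => [/alg2_cond_neq0 N0|_]; last exact: leq_addr.
case E: (rdiv q P N) => [[Q R] cd]; cbv beta iota.
apply: leq_trans (IH _ _ _ _ _ (alg2_inv_step N0 E inv)) _.
by move: (alg2_step_cost N0 E inv); rewrite -(leq_add2l c) !addnA.
Qed.

End Alg2Cost.

Theorem proposition38 :
  exists C : nat,
    forall (q m n k : nat) (F : finFieldType) (g r : 'I_n -> F),
      prime_power q -> (1 <= m)%N -> #|F| = (q ^ m)%N ->
      (1 <= k)%N -> (k <= n)%N ->
      Fq_lin_indep q g ->
      (alg2_cost q k (Pi_lin q g) (Lambda_lin q g r) <= C * n ^ 2)%N.
Proof.
exists 81%N => q m n k F g r [p [e [pp [_ ->]]]] _ _ k1 kn _.
have q_gt0 : (0 < p ^ e)%N by rewrite expn_gt0 prime_gt0.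
set Pi := Pi_lin _ g; set Lam := Lambda_lin _ g r.
have hPi : (size Pi <= n.+1)%N by apply: size_poly.
have hLam : (size Lam <= n)%N by apply: size_poly.
move: hPi hLam; set sPi := size Pi; set sLam := size Lam => hPi hLam.
have inv0 : alg2_inv (n + 3) Pi 0 (- Lam) 'X.
  rewrite /alg2_inv size_polyX size_polyN size_poly0 -/sPi -/sLam.
  by apply/and3P; split; lia.
have := alg2_loop_cost q_gt0 k (size Pi) (size Lam) inv0.
rewrite /alg2_cost /alg2_potential size_polyN -/sPi -/sLam => hcost.
apply: leq_trans hcost _.
have hpot : (maxn sPi sLam + 2 * sLam <= 4 * n)%N by lia.
have hB : (4 * (n + 3).+1 <= 4 * (5 * n))%N by lia.
move: (leq_mul hB hpot); set pot := (maxn _ _ + _)%N; clearbody pot.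
have hn : (n <= n * n)%N by rewrite leq_pmulr //; lia.
rewrite expnS expn1; lia.
Qed.
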